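(* Let $R$ be a ring. (a) If $\dim R=0$ then $R$ is Cohen-Macaulay. (b) If $R$ is a one-dimensional domain then $R$ is Cohen-Macaulay.
   Context: All rings are commutative with identity; $\dim$ is Krull dimension. For $x\in R$ let $C(x)$ be the complex $0\to R\to R_x\to 0$ ($R$ in degree $0$, natural localization map); for a finite sequence $\mathbf x=x_1,\dots,x_\ell$ put $C(\mathbf x)=C(x_1)\otimes_R\cdots\otimes_R C(x_\ell)$ and let $H^i_{\mathbf x}(M)$ be the $i$th cohomology of $C(\mathbf x)\otimes_R M$; $\ell(\mathbf x)=\ell$. Let $K(x)$ be $0\to R\xrightarrow{x}R\to 0$ (degrees $1,0$), $K(\mathbf x)=K(x_1)\otimes\cdots\otimes K(x_\ell)$, $H_i(\mathbf x)$ its homology. For $m\ge n$ the chain map $K(\mathbf x^m)\to K(\mathbf x^n)$ ($\mathbf x^m=x_1^m,\dots,x_\ell^m$) is the tensor product of the maps $K(x_i^m)\to K(x_i^n)$ given by multiplication by $x_i^{m-n}$ in degree $1$ and identity in degree $0$. $\mathbf x$ is weakly proregular if for every $n$ there is $m\ge n$ with $H_i(\mathbf x^m)\to H_i(\mathbf x^n)$ zero for all $i\ge1$. $\mathbf x$ is a parameter sequence on $R$ if it is weakly proregular, $(\mathbf x)R\neq R$, and $H^{\ell(\mathbf x)}_{\mathbf x}(R)_p\neq0$ for every prime $p\supseteq(\mathbf x)R$ (the empty sequence is a parameter sequence, and also a regular sequence). It is a strong parameter sequence if $x_1,\dots,x_i$ is a parameter sequence for each $i=1,\dots,\ell(\mathbf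 x)$. A regular sequence on $M$: each $x_i$ is a non-zero-divisor on $M/(x_1,\dots,x_{i-1})M$ and $M\neq(\mathbf x)M$. A ring $R$ is Cohen-Macaulay if every strong parameter sequence on $R$ is a regular sequence on $R$. *)

From HB Require Import structures.
From mathcomp Require Import all_boot all_order all_algebra.
Set Implicit Arguments. Unset Strict Implicit. Unset Printing Implicit Defensive.
Import Order.TTheory GRing.Theory Num.Theory.
Local Open Scope ring_scope.

Section Defs.
Variable R : comPzRingType.

Definition is_ideal (I : R -> Prop) : Prop :=
  [/\ I 0, (forall a b, I a -> I b -> I (a + b)) & (forall r a, I a -> I (r * a))].

Definition is_prime_ideal (P : R -> Prop) : Prop :=
  [/\ is_ideal P, ~ P 1 & (forall a b, P (a * b) -> P a \/ P b)].

Definition prime_chain (n : nat) (c : nat -> R -> Prop) : Prop :=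
  (forall i, (i <= n)%N -> is_prime_ideal (c i)) /\
  (forall i, (i < n)%N -> (forall r, c i r -> c i.+1 r) /\ exists r, c i.+1 r /\ ~ c i r).

Definition krull_dim_eq (n : nat) : Prop :=
  (exists c, prime_chain n c) /\ ~ (exists c, prime_chain n.+1 c).

Definition in_ideal (s : seq R) (r : R) : Prop :=
  exists c : 'I_(size s) -> R, r = \sum_(i < size s) c i * s`_i.

Definition regular_seq (x : seq R) : Prop :=
  (forall i, (i < size x)%N ->
     forall r, in_ideal (take i x) (x`_i * r) -> in_ideal (take i x) r) /\
  (size x = 0%N \/ ~ in_ideal x 1).

(* Koszul complex K(f_0,...,f_{l-1}) = tensor of the K(f_j): a chain is a
   function on subsets J of {0..l-1} (coefficient of e_J); degree = #|J|.
   d(e_{j_1 < ... < j_k}) = sum_t (-1)^(t-1) f_{j_t} e_{J \ j_t}. *)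
Definition koszul_d (l : nat) (f : nat -> R) (c : {set 'I_l} -> R)
  : {set 'I_l} -> R :=
  fun J => \sum_(j : 'I_l | j \notin J)
             (-1) ^+ #|[set k in J | (k < j)%N]| * f j * c (j |: J).

Definition in_degree (l : nat) (i : nat) (c : {set 'I_l} -> R) : Prop :=
  forall J : {set 'I_l}, #|J| <> i -> c J = 0.

Definition pow_seq (x : seq R) (m : nat) : nat -> R := fun j => x`_j ^+ m.

(* The map H_i(x^m) -> H_i(x^n) induced by the chain map
   e_J |-> (prod_{j in J} x_j^(m-n)) e_J is zero. *)
Definition koszul_map_zero (x : seq R) (m n i : nat) : Prop :=
  forall c : {set 'I_(size x)} -> R,
    in_degree i c -> (forall J, koszul_d (pow_seq x m) c J = 0) ->
    exists b : {set 'I_(size x)} -> R, in_degree i.+1 b /\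
      forall J, koszul_d (pow_seq x n) b J
                = (\prod_(j in J) x`_j ^+ (m - n)) * c J.

Definition weakly_proregular (x : seq R) : Prop :=
  forall n, (0 < n)%N -> exists m, (n <= m)%N /\
    forall i, (1 <= i)%N -> koszul_map_zero x m n i.

(* Top Cech cohomology H^l_x(R) = coker( (+)_i R_{x_1..^x_i..x_l} -> R_{x_1...x_l} ).
   Writing F = x_1...x_l, the class of a/F^n is zero iff
   a/F^n = sum_i b_i/(F/x_i)^m = (sum_i b_i x_i^m)/F^m in R_F,
   i.e. F^k (a F^m - (sum_i b_i x_i^m) F^n) = 0 for some k. *)
Definition cech_top_zero (x : seq R) (a : R) (n : nat) : Prop :=
  let F := \prod_(i < size x) x`_i in
  exists (b : 'I_(size x) -> R) (m k : nat),
    F ^+ k * (a * F ^+ m - (\sum_(i < size x) b i * x`_i ^+ m) * F ^+ n) = 0.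

(* (H^l_x(R))_p <> 0 : some class a/F^n is not killed by any s outside p. *)
Definition top_cech_loc_nonzero (x : seq R) (p : R -> Prop) : Prop :=
  exists (a : R) (n : nat), forall s, ~ p s -> ~ cech_top_zero x (s * a) n.

Definition parameter_seq (x : seq R) : Prop :=
  size x = 0%N \/
  [/\ weakly_proregular x, ~ in_ideal x 1 &
      forall p, is_prime_ideal p -> (forall i, (i < size x)%N -> p x`_i) ->
        top_cech_loc_nonzero x p].

Definition strong_parameter_seq (x : seq R) : Prop :=
  forall i, (1 <= i <= size x)%N -> parameter_seq (take i x).

Definition cohen_macaulay : Prop :=
  forall x : seq R, strong_parameter_seq x -> regular_seq x.

End Defs.

(* A parameter sequence x = x_1, ..., x_l of positive length generates a proper ideal,
   hence lies in a prime p with H^l_x(R)_p <> 0; this module vanishes as soon as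
   s (x_1 ... x_l)^j = 0 for some s outside p.  Given an ideal I and x_1 in p, either
   s x_1^j lies in I for some s outside p, or Krull's lemma gives a prime between I
   and p avoiding x_1.
   If dim R = 0, the second case with I = 0 would give a chain of length one, so x_1
   is nilpotent in R_p and H^l_x(R)_p = 0: only the empty sequence is a parameter
   sequence.
   If R is a one-dimensional domain, then x_1 <> 0, and for l >= 2 the second case
   with I = (x_1) would give a chain 0 < q < p; so s x_2^j lies in (x_1), which makes
   every class of H^l_x(R)_p come from the localization at x_2 ... x_l, where it
   vanishes.  Hence l <= 1, and a nonzero non-unit of a domain is a regular sequence. *)

From mathcomp Require Import all_boot all_order all_algebra.
From mathcomp Require Import boolp classical_sets ring.
Set Implicit Arguments. Unset Strict Implicit. Unset Printing Implicit Defensive.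
Import GRing.Theory.
Local Open Scope ring_scope.
Local Open Scope classical_set_scope.

Section Ideals.
Variable R : comPzRingType.

Lemma is_ideal_eq0 : is_ideal (fun r : R => r = 0).
Proof. by split=> [|a b -> ->|r a ->]; rewrite ?addr0 ?mulr0. Qed.

Lemma is_ideal_in_ideal (l : seq R) : is_ideal (in_ideal l).
Proof.
split.
- by exists (fun=> 0); rewrite big1 // => i _; rewrite mul0r.
- move=> _ _ [c ->] [d ->]; exists (fun i => c i + d i).
  by rewrite -big_split; apply: eq_bigr => i _; rewrite mulrDl.
- move=> r _ [c ->]; exists (fun i => r * c i).
  by rewrite mulr_sumr; apply: eq_bigr => i _; rewrite mulrA.
Qed.

Lemma in_ideal_nth (l : seq R) i : (i < size l)%N -> in_ideal l l`_i.
Proof.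
move=> il; exists (fun j => ((j : nat) == i)%:R).
rewrite (bigD1 (Ordinal il)) //= eqxx mul1r big1 ?addr0 // => j /negbTE.
by rewrite -val_eqE /= => ->; rewrite mul0r.
Qed.

Lemma in_ideal_seq1 (x r : R) : in_ideal [:: x] r -> exists c, r = c * x.
Proof. by move=> [c ->]; rewrite big_ord1; exists (c ord0). Qed.

Definition mult_closed (S : set R) := S 1 /\ forall a b, S a -> S b -> S (a * b).

Lemma exists_ideal_maximal_avoiding (I S : set R) :
  is_ideal I -> (forall r, S r -> ~ I r) ->
  exists A, [/\ is_ideal A, I `<=` A, (forall r, S r -> ~ A r) &
    forall B, is_ideal B -> A `<=` B -> (forall r, S r -> ~ B r) -> B `<=` A].
Proof.
move=> [I0 ID IM] IS.
pose P (A : set R) := [/\ forall a b, A a -> A b -> A (a + b),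
  forall r a, A a -> A (r * a), forall r, S r -> ~ A r & A = set0 \/ I `<=` A].
(* The union of the empty chain is [set0], hence the disjunct [A = set0] in [P]. *)
have [A [[AD AM AS AI] Amax]] : exists A, P A /\ forall B, A `<` B -> ~ P B.
  apply: Zorn_bigcup => F FP Ftot; split.
  - move=> a b [X FX Xa] [Y FY Yb].
    have [XY|YX] := Ftot _ _ FX FY.
    + by exists Y => //; case: (FP _ FY) => + _ _ _; apply => //; apply: XY.
    + by exists X => //; case: (FP _ FX) => + _ _ _; apply => //; apply: YX.
  - by move=> r a [X FX Xa]; exists X => //; case: (FP _ FX) => _ + _ _; apply.
  - by move=> r Sr [X FX Xr]; case: (FP _ FX) => _ _ /(_ r Sr).
  - have [[X FX [r Xr]]|Fe] := pselect (exists2 X, F X & X !=set0).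
      right => i Ii; exists X => //.
      by case: (FP _ FX) => _ _ _ [X0|]; [rewrite X0 in Xr | apply].
    left; apply/seteqP; split => // r [X FX Xr].
    by apply: Fe; exists X => //; exists r.
have {}AI : I `<=` A.
  case: AI => // A0; exfalso; apply: (Amax I); last by split => //; right.
  by rewrite A0; split => // /(_ 0 I0).
exists A; split => //; first by split => //; apply: AI.
move=> B [_ BD BM] AB BS; apply: contrapT => BA; apply: (Amax B) => //.
by split => //; right; apply: subset_trans AB.
Qed.

Lemma ideal_maximal_avoiding_prime (S A : set R) :
  mult_closed S -> is_ideal A -> (forall r, S r -> ~ A r) ->
  (forall B, is_ideal B -> A `<=` B -> (forall r, S r -> ~ B r) -> B `<=` A) ->
  is_prime_ideal A.
Proof.
move=> [S1 SM] [A0 AD AM] AS Amax; split => //; first exact: AS.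
have meet c : ~ A c -> exists q r, A q /\ S (q + r * c).
  move=> Ac; apply: contrapT => nmeet; apply: Ac.
  apply: (Amax (fun y => exists q r, A q /\ y = q + r * c)); last first.
  - by exists 0, 1; rewrite add0r mul1r.
  - by move=> s Ss [q [r [Aq sE]]]; apply: nmeet; exists q, r; rewrite -sE.
  - by move=> q Aq; exists q, 0; rewrite mul0r addr0.
  split.
  - by exists 0, 0; rewrite mul0r addr0.
  - move=> _ _ [q1 [r1 [A1 ->]]] [q2 [r2 [A2 ->]]]; exists (q1 + q2), (r1 + r2).
    by split; [exact: AD | ring].
  - move=> r _ [q1 [r1 [A1 ->]]]; exists (r * q1), (r * r1).
    by split; [exact: AM | ring].
move=> a b Aab; apply: contrapT => /not_orP[/meet[q1 [r1 [A1 S1a]]]].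
move=> /meet[q2 [r2 [A2 S2b]]]; apply: (AS _ (SM _ _ S1a S2b)).
have -> : (q1 + r1 * a) * (q2 + r2 * b)
    = (q2 + r2 * b) * q1 + (r1 * a * q2 + r1 * r2 * (a * b)) by ring.
by apply: (AD); [|apply: (AD)]; apply: (AM).
Qed.

Lemma exists_prime_avoiding (I S : set R) :
  is_ideal I -> mult_closed S -> (forall r, S r -> ~ I r) ->
  exists q, [/\ is_prime_ideal q, I `<=` q & forall r, S r -> ~ q r].
Proof.
move=> idI Smult IS.
have [A [idA IA AS Amax]] := exists_ideal_maximal_avoiding idI IS.
by exists A; split => //; apply: ideal_maximal_avoiding_prime Smult idA AS Amax.
Qed.

Lemma exists_prime_containing (I : set R) :
  is_ideal I -> ~ I 1 -> exists q, is_prime_ideal q /\ I `<=` q.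
Proof.
move=> idI I1; have S1 : mult_closed (fun r : R => r = 1).
  by split => // _ _ -> ->; rewrite mulr1.
have [|q [qp Iq _]] := exists_prime_avoiding idI S1; first by move=> _ ->.
by exists q.
Qed.

Lemma power_in_or_prime_between (I p : set R) (x : R) :
  is_ideal I -> is_prime_ideal p ->
  (exists s j, ~ p s /\ I (s * x ^+ j)) \/
  exists q, [/\ is_prime_ideal q, I `<=` q, q `<=` p & ~ q x].
Proof.
move=> idI [_ p1 pM].
have [|nI] := pselect (exists s j, ~ p s /\ I (s * x ^+ j)); first by left.
right; pose S r := exists s j, ~ p s /\ r = s * x ^+ j.
have Smult : mult_closed S.
  split; first by exists 1, 0%N; rewrite mulr1.
  move=> _ _ [s [j [ps ->]]] [t [k [pt ->]]]; exists (s * t), (j + k)%N.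
  by split; [case/pM | rewrite exprD mulrACA].
have [|q [qp Iq qS]] := exists_prime_avoiding idI Smult.
  by move=> _ [s [j [ps ->]]] Isx; apply: nI; exists s, j.
exists q; split => // [r qr|qx].
  by apply: contrapT => pr; apply: (qS r) qr; exists r, 0%N; rewrite mulr1.
by apply: (qS x) qx; exists 1, 1%N; rewrite mul1r.
Qed.

Lemma prime_chain0 (p : set R) : is_prime_ideal p -> prime_chain 0 (fun=> p).
Proof. by split. Qed.

Lemma prime_chain_rcons n (c : nat -> set R) (p : set R) :
  prime_chain n c -> is_prime_ideal p -> c n `<=` p -> (exists r, p r /\ ~ c n r) ->
  prime_chain n.+1 (fun i => if i == n.+1 then p else c i).
Proof.
move=> [cp cinc] pp cnp pnc; split => i.
  by case: eqP => // /eqP ne; rewrite leq_eqVlt (negbTE ne) ltnS; apply: cp.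
rewrite ltnS leq_eqVlt => /orP[/eqP->|ltin]; first by rewrite eqxx ltn_eqF.
by rewrite eqSS (ltn_eqF ltin) (ltn_eqF (ltn_trans ltin (ltnSn n))); apply: cinc.
Qed.

End Ideals.

Lemma is_prime_ideal_eq0 (R : idomainType) : is_prime_ideal (fun r : R => r = 0).
Proof.
split; [exact: is_ideal_eq0 | exact/eqP/oner_neq0 |].
by move=> a b /eqP; rewrite mulf_eq0 => /orP[] /eqP; [left | right].
Qed.

Section ParameterSequences.
Variable R : comPzRingType.
Implicit Types (x : seq R) (p : set R).

Lemma prod_annihilated x (s : R) i j :
  (i < size x)%N -> s * x`_i ^+ j = 0 -> s * (\prod_(k < size x) x`_k) ^+ j = 0.
Proof.
by move=> ix sx; rewrite (bigD1 (Ordinal ix)) //= exprMn mulrA sx mul0r.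
Qed.

Lemma top_cech_loc_zero x p (s : R) j :
  ~ p s -> s * (\prod_(i < size x) x`_i) ^+ j = 0 -> ~ top_cech_loc_nonzero x p.
Proof.
move=> ps sF [a [n ha]]; apply: (ha s ps); exists (fun=> 0), 0%N, j.
rewrite [X in _ - X * _]big1 => [|i _]; last exact: mul0r.
by rewrite mul0r subr0 expr0 mulr1 mulrCA mulrA sF mul0r.
Qed.

Lemma top_cech_loc_zero_cons2 (x0 x1 : R) rest p (s c : R) j :
  is_prime_ideal p -> ~ p s -> s * x1 ^+ j = c * x0 ->
  ~ top_cech_loc_nonzero [:: x0, x1 & rest] p.
Proof.
move=> [_ p1 pM] ps sx [a [n ha]].
have psn : ~ p (s ^+ n).
  by elim: n {ha} => [|n IH]; rewrite ?expr0 // exprS => /pM[].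
pose H := \prod_(i < size rest) rest`_i; pose F := x0 * (x1 * H).
have sF : s * F ^+ j = c * H ^+ j * x0 ^+ j.+1.
  rewrite !exprMn exprS.
  have -> : s * (x0 ^+ j * (x1 ^+ j * H ^+ j)) = s * x1 ^+ j * (x0 ^+ j * H ^+ j) by ring.
  by rewrite sx; ring.
(* In R_F, s^n a / F^n = a (c H^j)^n / (x1 H)^(j.+1 * n), a class from R_(x1 H). *)
pose b (i : 'I_(size rest).+2) := if val i == 0%N then a * (c * H ^+ j) ^+ n else 0.
have prodE : \prod_(i < (size rest).+2) [:: x0, x1 & rest]`_i = F.
  by rewrite !big_ord_recl.
have sumE m : \sum_(i < (size rest).+2) b i * [:: x0, x1 & rest]`_i ^+ m
    = a * (c * H ^+ j) ^+ n * x0 ^+ m.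
  by rewrite big_ord_recl big1 ?addr0 // => i _; rewrite /b /= mul0r.
apply: (ha _ psn); exists b, (j.+1 * n)%N, 0%N.
rewrite /= prodE sumE expr0 mul1r !exprM [F ^+ j.+1]exprS.
have -> : s ^+ n * a * (F * F ^+ j) ^+ n = a * F ^+ n * (s * F ^+ j) ^+ n.
  by rewrite !exprMn; ring.
by rewrite sF !exprMn; ring.
Qed.

Lemma parameter_seq_prime x :
  parameter_seq x -> (0 < size x)%N ->
  exists p, [/\ is_prime_ideal p, forall i, (i < size x)%N -> p x`_i &
    top_cech_loc_nonzero x p].
Proof.
case=> [-> //|[_ x1 hp] _].
have [p [pp xp]] := exists_prime_containing (is_ideal_in_ideal x) x1.
have px i : (i < size x)%N -> p x`_i by move=> ix; apply/xp/in_ideal_nth.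
by exists p; split => //; apply: hp.
Qed.

Lemma parameter_seq_prod_neq0 x :
  parameter_seq x -> (0 < size x)%N -> \prod_(i < size x) x`_i != 0.
Proof.
move=> px x0; have [p [[_ p1 _] _ hp]] := parameter_seq_prime px x0.
by apply/eqP => F0; apply: (top_cech_loc_zero (j := 1) p1 _ hp); rewrite F0 mulr0.
Qed.

Lemma strong_parameter_seqW x : strong_parameter_seq x -> parameter_seq x.
Proof.
case: x => [|x0 x] hx; first by left.
by move: (hx (size (x0 :: x))); rewrite take_size leqnn; apply.
Qed.

End ParameterSequences.

Lemma regular_seq_nil (R : comPzRingType) : regular_seq ([::] : seq R).
Proof. by split => //; left. Qed.

Lemma regular_seq1 (R : idomainType) (x : R) :
  x != 0 -> ~ in_ideal [:: x] 1 -> regular_seq [:: x].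
Proof.
move=> x0 x1; split; last by right.
move=> [|//] _ r [c]; rewrite big_ord0 => /eqP; rewrite mulf_eq0 (negbTE x0) /=.
by move/eqP->; case: (is_ideal_in_ideal (@nil R)).
Qed.

Lemma dim0_nilpotent_at_prime (R : comPzRingType) (p : set R) (x : R) :
  krull_dim_eq R 0 -> is_prime_ideal p -> p x ->
  exists s j, ~ p s /\ s * x ^+ j = 0.
Proof.
move=> [_ nochain] pp px.
have [//|[q [qp _ qsubp qx]]] := power_in_or_prime_between x (@is_ideal_eq0 R) pp.
case: nochain; exists (fun i => if i == 1%N then p else q).
by apply: prime_chain_rcons (prime_chain0 qp) pp qsubp _; exists x.
Qed.

Lemma dim0_parameter_seq_nil (R : comPzRingType) (x : seq R) :
  krull_dim_eq R 0 -> parameter_seq x -> x = [::].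
Proof.
case: x => [//|x0 x] hdim px; exfalso.
have [p [pp xp hp]] := parameter_seq_prime px isT.
have [s [j [ps sx]]] := dim0_nilpotent_at_prime hdim pp (xp 0%N isT).
exact: top_cech_loc_zero ps (prod_annihilated (x := x0 :: x) (i := 0) isT sx) hp.
Qed.

Lemma dim1_power_in_principal (R : idomainType) (p : set R) (x y : R) :
  krull_dim_eq R 1 -> is_prime_ideal p -> x != 0 -> p y ->
  exists s j c, ~ p s /\ s * y ^+ j = c * x.
Proof.
move=> [_ nochain] pp x0 py.
have [[s [j [ps /in_ideal_seq1[c sy]]]]|[q [qp xq qsubp qy]]] :=
  power_in_or_prime_between y (is_ideal_in_ideal [:: x]) pp.
  by exists s, j, c.
have qx : q x by apply: xq (in_ideal_nth (l := [:: x]) (i := 0) isT).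
have q0 : q 0 by case: qp => [[]].
case: nochain.
exists (fun i => if i == 2%N then p else if i == 1%N then q else fun r => r = 0).
apply: prime_chain_rcons pp qsubp _; last by exists y.
apply: prime_chain_rcons (prime_chain0 (is_prime_ideal_eq0 R)) qp _ _.
  by move=> r ->.
by exists x; split => //; apply/eqP.
Qed.

Lemma dim1_parameter_seq_size (R : idomainType) (x : seq R) :
  krull_dim_eq R 1 -> parameter_seq x -> (size x <= 1)%N.
Proof.
case: x => [|x0 [|x1 x]] // hdim px.
have [p [pp xp hp]] := parameter_seq_prime px isT.
have x0n0 : x0 != 0.
  apply: contraNneq (parameter_seq_prod_neq0 px isT) => x00.
  by rewrite big_ord_recl x00 mul0r.
have [s [j [c [ps sx]]]] := dim1_power_in_principal hdim pp x0n0 (xp 1%N isT).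
by case: (top_cech_loc_zero_cons2 pp ps sx hp).
Qed.

Theorem proposition4p4 :
  (forall R : comPzRingType, krull_dim_eq R 0 -> cohen_macaulay R) /\
  (forall R : idomainType, krull_dim_eq R 1 -> cohen_macaulay R).
Proof.
split=> R hdim x /strong_parameter_seqW px.
  by rewrite (dim0_parameter_seq_nil hdim px); apply: regular_seq_nil.
move: (dim1_parameter_seq_size hdim px) (parameter_seq_prod_neq0 px).
case: x px => [|x0 [|//]] px _ x0n0; first exact: regular_seq_nil.
apply: regular_seq1; first by move: (x0n0 isT); rewrite big_ord1.
by case: px => [//|[]].
Qed.
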